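(* Let $p,b\in\mathbb{R}^K$ with $p_1\ge p_2\ge\dots\ge p_K\ge0$, $\sum_{i=1}^Kp_i=1$, and $b_i\ge0$ for all $i$. Then $$\sum_{i=1}^Kp_ib_i^2-\Big[\sum_{i=1}^Kp_ib_i\Big]^2\ge p_1\sum_{j=2}^Kp_j\,[b_1-b_j]^2.$$ *)

From mathcomp Require Import all_boot all_order all_algebra.

From mathcomp Require Import all_boot all_order all_algebra.
From mathcomp Require Import ring.
Set Implicit Arguments.
Unset Strict Implicit.
Unset Printing Implicit Defensive.

Import Order.TTheory GRing.Theory Num.Theory.
Local Open Scope ring_scope.

(* The variance of [b] under [p] is half the mean squared distance
   [sum_(i,j) p_i p_j (b_i - b_j)^2] between two independent samples.  Dropping
   every pair that does not involve the index 1 leaves the pairs [(1, j)] and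
   [(j, 1)], which contribute [2 p_1 sum_(j != 1) p_j (b_1 - b_j)^2]. *)

Section PairwiseVariance.

Variables (I : finType) (R : comPzRingType) (p b : I -> R).
Hypothesis sum_p1 : \sum_i p i = 1.

Lemma sum_pairwise_sqr_dist :
  \sum_i \sum_j p i * p j * (b i - b j) ^+ 2
    = 2 * (\sum_i p i * b i ^+ 2 - (\sum_i p i * b i) ^+ 2).
Proof.
set S2 := \sum_i p i * b i ^+ 2; set m := \sum_i p i * b i.
have row i : \sum_j p i * p j * (b i - b j) ^+ 2
               = p i * b i ^+ 2 + S2 * p i - 2 * (p i * b i) * m.
  transitivity (\sum_j (p i * b i ^+ 2 * p j + p j * b j ^+ 2 * p i
                        - 2 * (p i * b i) * (p j * b j))).
    by apply: eq_bigr => j _; ring.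
  by rewrite sumrB big_split /= -mulr_sumr -mulr_suml -mulr_sumr sum_p1 mulr1.
rewrite (eq_bigr _ (fun i _ => row i)) sumrB big_split /= -mulr_sumr sum_p1.
by rewrite -/S2 -mulr_suml -mulr_sumr -/m; ring.
Qed.

End PairwiseVariance.

Lemma sum_row_col_le_sum (I : finType) (R : numDomainType) (G : I -> I -> R)
    (i0 : I) :
  (forall i j, 0 <= G i j) ->
  \sum_(j | j != i0) (G i0 j + G j i0) <= \sum_i \sum_j G i j.
Proof.
move=> G_ge0; rewrite big_split /= [X in _ <= X](bigD1 i0) //=.
apply: lerD.
  by rewrite [X in _ <= X](bigD1 i0) //= lerDr.
apply: ler_sum => i _; rewrite (bigD1 i0) //= lerDl.
by apply: sumr_ge0 => j _.
Qed.

Theorem lemma9 (R : realFieldType) (K : nat) (p b : 'I_K.+1 -> R)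
  (hmono : forall i j : 'I_K.+1, (i <= j)%N -> p j <= p i)
  (hnn : forall i, 0 <= p i)
  (hsum : \sum_i p i = 1)
  (hb : forall i, 0 <= b i) :
  \sum_i p i * b i ^+ 2 - (\sum_i p i * b i) ^+ 2
    >= p ord0 * \sum_(j : 'I_K.+1 | j != ord0) p j * (b ord0 - b j) ^+ 2.
Proof.
pose G i j := p i * p j * (b i - b j) ^+ 2.
have G_ge0 i j : 0 <= G i j by rewrite /G mulr_ge0 ?sqr_ge0 ?mulr_ge0.
have row_col : 2 * (p ord0 * \sum_(j | j != ord0) p j * (b ord0 - b j) ^+ 2)
                 = \sum_(j | j != ord0) (G ord0 j + G j ord0).
  rewrite mulr_sumr mulr_sumr; apply: eq_bigr => j _.
  by rewrite /G; ring.
have := sum_row_col_le_sum ord0 G_ge0.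
by rewrite -row_col (sum_pairwise_sqr_dist b hsum) ler_pM2l.
Qed.
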